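(* Let $p$ be a prime number, and $G$ a finite group that admits a normal $p$-subgroup $E$. Consider a subgroup $H$ of $E$ with $\text{Ш}_{\omega}^{2}(E,J_{E/H})=0$, and let $\mathcal{D}$ be an admissible set of subgroups of $G$. Then there is an exact sequence \[ 0\rightarrow ((E \cap HG^{\mathrm{der}})/HE^{\mathrm{der}})^{\vee}\rightarrow \operatorname{Sel}_{H,\mathcal{D}}^{2}(G,J_{G/E}) \xrightarrow{j_{*}} \text{Ш}_{\mathcal{D}}^{2}(G,J_{G/H}) \rightarrow 0. \]
   Context: For $H<G$, $J_{G/H}$ is defined by $0\to\mathbb{Z}\to\operatorname{Ind}_H^G\mathbb{Z}\to J_{G/H}\to0$. For $H<E<G$ there is an exact sequence of $G$-lattices $0\to J_{G/E}\xrightarrow{j} J_{G/H}\to \operatorname{Ind}_E^G J_{E/H}\to 0$, and $j_*\colon H^2(G,J_{G/E})\to H^2(G,J_{G/H})$ is the induced map. For a set $\mathcal{D}$ of subgroups, $\text{Ш}^2_{\mathcal{D}}(G,M):=\ker\big(H^2(G,M)\to\bigoplus_{D\in\mathcal{D}}H^2(D,M)\big)$ and $\text{Ш}^2_\omega$ is the case where $\mathcal{D}$ is the set of cyclic subgroups; $\mathcal{D}$ is admissible if it contains all cyclic subgroups and is closed under conjugation. $\operatorname{Sel}_{H,\mathcal{D}}^{2}(G,J_{G/E}):=j_*^{-1}(\text{Ш}^2_{\mathcal{D}}(G,J_{G/H}))\subset H^2(G,J_{G/E})$. $G^{\mathrm{der}}$ denotes the commutator subgroup, and $A^\vee=\mathrm{Hom}(A,\mathbb{Q}/\mathbb{Z})$.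 *)

From mathcomp Require Import all_boot all_order all_algebra all_fingroup all_solvable.
Set Implicit Arguments. Unset Strict Implicit. Unset Printing Implicit Defensive.
Import GRing.Theory Num.Theory.
Local Open Scope ring_scope.

Section Coh.
Variable gT : finGroupType.

(* Ind_H^A Z, realized as Z-valued functions on gT supported on A and
   right H-invariant (the coset xH <-> its indicator function).  The action
   of g is (g . phi)(x) = phi (g^-1 x). *)
Definition Ind (A H : {set gT}) (phi : gT -> int) : Prop :=
  (forall x, x \notin A -> phi x = 0) /\
  (forall x h, x \in A -> h \in H -> phi (x * h)%g = phi x).

(* phi lies in the image of Z -> Ind_H^A Z (1 |-> sum of all cosets = 1_A);
   so J_{A/H} = Ind_H^A Z / Z and "phi = 0 in J" means IsConst A phi. *)
Definition IsConst (A : {set gT}) (phi : gT -> int) : Prop :=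
  exists n : int, forall x, x \in A -> phi x = n.

(* 2-cochains with values in Ind_H^A Z (representing J_{A/H}-valued cochains) *)
Definition cochain2 := gT -> gT -> gT -> int.

Definition cocycle (A H D : {set gT}) (c : cochain2) : Prop :=
  (forall g1 g2, g1 \in D -> g2 \in D -> Ind A H (c g1 g2)) /\
  (forall g1 g2 g3, g1 \in D -> g2 \in D -> g3 \in D ->
     IsConst A (fun x => c g2 g3 (g1^-1 * x)%g - c (g1 * g2)%g g3 x
                         + c g1 (g2 * g3)%g x - c g1 g2 x)).

Definition coboundary (A H D : {set gT}) (c : cochain2) : Prop :=
  exists b : gT -> gT -> int,
    (forall g, g \in D -> Ind A H (b g)) /\
    (forall g1 g2, g1 \in D -> g2 \in D ->
       IsConst A (fun x => c g1 g2 x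
                   - (b g2 (g1^-1 * x)%g - b (g1 * g2)%g x + b g1 x))).

Definition cohomologous (A H D : {set gT}) (c c' : cochain2) : Prop :=
  coboundary A H D (fun g1 g2 x => c g1 g2 x - c' g1 g2 x).

Definition sha_omega_trivial (E H : {set gT}) : Prop :=
  forall c, cocycle E H E c ->
    (forall C : {group gT}, C \subset E -> cyclic C -> coboundary E H C c) ->
    coboundary E H E c.

Definition admissible (G : {set gT}) (Ds : {set {group gT}}) : Prop :=
  (forall D : {group gT}, D \in Ds -> D \subset G) /\
  (forall C : {group gT}, C \subset G -> cyclic C -> C \in Ds) /\
  (forall (D : {group gT}) g, D \in Ds -> g \in G -> (D :^ g)%G \in Ds).

(* Elements of Hom(K/N, Q/Z), represented by rational lifts *)
Definition dual_elt (K N : {set gT}) (chi : gT -> rat) : Prop :=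
  (forall x y, x \in K -> y \in K -> chi (x * y)%g - chi x - chi y \is a Num.int) /\
  (forall h, h \in N -> chi h \is a Num.int).

Definition dual_eq (K : {set gT}) (chi chi' : gT -> rat) : Prop :=
  forall x, x \in K -> chi x - chi' x \is a Num.int.

End Coh.

(* Cochains with values in J_{A/H} are integral functions modulo constants, and
   all constructions are carried out on rational lifts: with coefficients in Q
   every cocycle of a finite group is a coboundary (average over the group), so
   only integrality has to be tracked.

   Let F be a right H-invariant function on G with F (x e) - F x = F e - F 1
   modulo Z for e in E, and let tr be a transversal of G/E.  The coboundary
   Psi F of (g, x) |-> F (tr x) - F (g^-1 tr x) is an integral E-invariant
   cocycle, trivial in H^2(G, J_{G/H}); it is trivial in H^2(G, J_{G/E}) iff
   the Q/Z-character F - F 1 of E extends to G, i.e. (Q/Z being injective) iff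
   it vanishes on K = E :&: H G'.  Every class in ker j_* is some Psi F, and
   Q/Z-characters of K trivial on N = H E' extend to E, which identifies
   (K/N)^vee with ker j_*.

   For surjectivity, a J_{G/H}-cocycle that is trivial on all cyclic subgroups
   restricts to such a cocycle of E, which is trivial by the hypothesis on
   Sha^2_omega(E, J_{E/H}); transporting this trivialization along tr turns the
   cocycle into a cohomologous E-invariant one, i.e. into an element of the
   Selmer group mapping to it. *)

From mathcomp Require Import all_boot all_order all_algebra all_fingroup all_solvable.
From mathcomp Require Import ring lra zify.
From Stdlib Require Import ClassicalEpsilon.
Import GRing.Theory Num.Theory.
Local Open Scope ring_scope.

Set Implicit Arguments. Unset Strict Implicit. Unset Printing Implicit Defensive.

Local Notation integral q := (q \is a @Num.int rat).

Local Ltac int_closure :=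
  repeat (first [assumption | rewrite rpredN | apply: rpredD | apply: rpred0]).

Section RationalCochains.
Variable gT : finGroupType.
Implicit Types (D : {group gT}) (X : {set gT}).

Definition delta1 (b : gT -> gT -> rat) g1 g2 x :=
  b g2 (g1^-1 * x)%g - b (g1 * g2)%g x + b g1 x.

Definition delta2 (c : gT -> gT -> gT -> rat) g1 g2 g3 x :=
  c g2 g3 (g1^-1 * x)%g - c (g1 * g2)%g g3 x + c g1 (g2 * g3)%g x - c g1 g2 x.

Lemma delta2_delta1 b g1 g2 g3 x : delta2 (delta1 b) g1 g2 g3 x = 0.
Proof. by rewrite /delta2 /delta1 !invMg !mulgA; ring. Qed.

(* Cohomology of D with values in a Q-module is killed by #|D|: averaging over D
   gives the contracting homotopies avg2 and avg1 in degrees 2 and 1 *)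
Definition avg2 D (c : gT -> gT -> gT -> rat) g x :=
  (#|D|%:R)^-1 * \sum_(k in D) c g k x.

Definition avg1 D (z : gT -> gT -> rat) x := - (#|D|%:R)^-1 * \sum_(k in D) z k x.

Lemma sum_mulgl D g (f : gT -> rat) : g \in D ->
  \sum_(k in D) f (g * k)%g = \sum_(k in D) f k.
Proof.
move=> gD; rewrite [RHS](reindex_inj (mulgI g)) /=.
by apply: eq_bigl => k; rewrite groupMl.
Qed.

Lemma card_neq0 D : (#|D|%:R : rat) != 0.
Proof. by rewrite pnatr_eq0 -lt0n cardG_gt0. Qed.

Lemma avg2_const D X c :
  (forall g1 g2 g3 x y, g1 \in D -> g2 \in D -> g3 \in D -> x \in X -> y \in X ->
     delta2 c g1 g2 g3 x = delta2 c g1 g2 g3 y) ->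
  forall g1 g2 x y, g1 \in D -> g2 \in D -> x \in X -> y \in X ->
   c g1 g2 x - delta1 (avg2 D c) g1 g2 x = c g1 g2 y - delta1 (avg2 D c) g1 g2 y.
Proof.
move=> c_const g1 g2 x y g1D g2D xX yX.
have avgE z : c g1 g2 z - delta1 (avg2 D c) g1 g2 z =
    - (#|D|%:R)^-1 * \sum_(k in D) delta2 c g1 g2 k z.
  rewrite /delta1 /avg2 /delta2 sumrB big_split sumrB /=.
  rewrite (@sum_mulgl D g2 (fun k => c g1 k z) g2D) sumr_const -mulr_natr.
  by field; apply: card_neq0.
by rewrite !avgE; congr (_ * _); apply: eq_bigr => k kD; apply: c_const.
Qed.

Lemma avg1_const D X z :
  (forall g1 g2 x y, g1 \in D -> g2 \in D -> x \in X -> y \in X ->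
     z (g1 * g2)%g x - z g1 x - z g2 (g1^-1 * x)%g =
     z (g1 * g2)%g y - z g1 y - z g2 (g1^-1 * y)%g) ->
  forall g x y, g \in D -> x \in X -> y \in X ->
   z g x - (avg1 D z (g^-1 * x)%g - avg1 D z x) =
   z g y - (avg1 D z (g^-1 * y)%g - avg1 D z y).
Proof.
move=> z_const g x y gD xX yX.
have avgE u : z g u - (avg1 D z (g^-1 * u)%g - avg1 D z u) =
    - (#|D|%:R)^-1 * \sum_(k in D) (z (g * k)%g u - z g u - z k (g^-1 * u)%g).
  rewrite /avg1 sumrB sumrB /=.
  rewrite (@sum_mulgl D g (fun k => z k u) gD) sumr_const -mulr_natr.
  by field; apply: card_neq0.
by rewrite !avgE; congr (_ * _); apply: eq_bigr => k kD; apply: z_const.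
Qed.

Lemma eq_avg2 D c g x y :
  (forall k, k \in D -> c g k x = c g k y) -> avg2 D c g x = avg2 D c g y.
Proof. by move=> eq_c; congr (_ * _); apply: eq_bigr. Qed.

Lemma eq_avg1 D z x y :
  (forall k, k \in D -> z k x = z k y) -> avg1 D z x = avg1 D z y.
Proof. by move=> eq_z; congr (_ * _); apply: eq_bigr. Qed.

End RationalCochains.

Section QZCharacters.
Variable gT : finGroupType.
Implicit Types (A L G E H : {group gT}) (th phi : gT -> rat).

Definition qz_morph (A : {set gT}) th :=
  forall x y, x \in A -> y \in A -> integral (th (x * y)%g - th x - th y).

Definition qz_extendable (A L : {set gT}) phi :=
  exists th, qz_morph A th /\ {in L, forall l, integral (th l - phi l)}.

Lemma qz_morph1 A th : qz_morph A th -> integral (th 1%g).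
Proof.
move=> thA; have := thA 1%g 1%g (group1 A) (group1 A); rewrite mulg1 => th11.
have -> : th 1%g = - (th 1%g - th 1%g - th 1%g) by ring.
by int_closure.
Qed.

Lemma qz_morphV A th x : qz_morph A th -> x \in A -> integral (th x^-1%g + th x).
Proof.
move=> thA xA; have := thA x^-1%g x (groupVr xA) xA; rewrite mulVg => thVx.
have th1 := qz_morph1 thA.
have -> : th x^-1%g + th x = th 1%g - (th 1%g - th x^-1%g - th x) by ring.
by int_closure.
Qed.

Lemma qz_morphX A th y q : qz_morph A th -> y \in A ->
  integral (th (y ^+ q)%g - q%:R * th y).
Proof.
move=> thA yA; elim: q => [|q IHq]; first by rewrite expg0 mul0r subr0 (qz_morph1 thA).
have := thA _ _ (groupX q yA) yA; rewrite -expgSr => thSq.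
have -> : th (y ^+ q.+1)%g - q.+1%:R * th y =
  (th (y ^+ q.+1)%g - th (y ^+ q)%g - th y) + (th (y ^+ q)%g - q%:R * th y).
  by rewrite -addn1 natrD; ring.
by int_closure.
Qed.

Lemma qz_morph_der1 A th : qz_morph A th -> {in A^`(1)%g, forall y, integral (th y)}.
Proof.
move=> thA.
have intG : group_set [set y in A | integral (th y)].
  apply/group_setP; split; first by rewrite inE group1 (qz_morph1 thA).
  move=> x y; rewrite !inE => /andP[xA thx] /andP[yA thy]; rewrite groupM //=.
  have thxy := thA x y xA yA.
  have -> : th (x * y)%g = (th (x * y)%g - th x - th y) + th x + th y by ring.
  by int_closure.
suff /subsetP sA'int : A^`(1)%g \subset Group intG.
  by move=> y /sA'int; rewrite inE => /andP[].
rewrite derg1 gen_subG; apply/subsetP => _ /imset2P[a b aA bA ->].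
rewrite inE /= groupR //= /commg /conjg.
have abA := groupM aA bA.
have th_ab1 := thA _ _ (groupVr aA) (groupM (groupVr bA) abA).
have th_ab2 := thA _ _ (groupVr bA) abA; have th_ab := thA _ _ aA bA.
have thVa := qz_morphV thA aA; have thVb := qz_morphV thA bA.
have -> : th (a^-1 * (b^-1 * (a * b)))%g =
   (th (a^-1 * (b^-1 * (a * b)))%g - th a^-1%g - th (b^-1 * (a * b))%g)
 + (th (b^-1 * (a * b))%g - th b^-1%g - th (a * b)%g)
 + (th (a * b)%g - th a - th b) + (th a^-1%g + th a) + (th b^-1%g + th b) by ring.
by int_closure.
Qed.

Lemma qz_morph_transl A (u : gT -> rat) :
  (forall g x, g \in A -> x \in A -> integral (u x - u (g^-1 * x)%g - (u 1%g - u g^-1%g))) ->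
  qz_morph A (fun g => u 1%g - u g^-1%g).
Proof.
move=> u_transl g1 g2 g1A g2A; have g12A := groupM g1A g2A.
have u_1 := u_transl _ _ g1A g12A; have u_2 := u_transl _ _ g2A g2A.
have u_12 := u_transl _ _ g12A g12A; rewrite mulKg in u_1; rewrite !mulVg in u_2 u_12.
have -> : u 1%g - u (g1 * g2)^-1%g - (u 1%g - u g1^-1%g) - (u 1%g - u g2^-1%g) =
  - (u (g1 * g2)%g - u 1%g - (u 1%g - u (g1 * g2)^-1%g))
  + (u (g1 * g2)%g - u g2 - (u 1%g - u g1^-1%g)) + (u g2 - u 1%g - (u 1%g - u g2^-1%g)) by ring.
by int_closure.
Qed.

Lemma dual_eltD (K N : {set gT}) chi chi' : dual_elt K N chi -> dual_elt K N chi' ->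
  dual_elt K N (fun x => chi x + chi' x).
Proof.
move=> [chiK chiN] [chi'K chi'N]; split=> [x y xK yK | h hN]; last first.
  by rewrite rpredD ?chiN ?chi'N.
have chi_xy := chiK x y xK yK; have chi'_xy := chi'K x y xK yK.
have -> : chi (x * y)%g + chi' (x * y)%g - (chi x + chi' x) - (chi y + chi' y) =
  (chi (x * y)%g - chi x - chi y) + (chi' (x * y)%g - chi' x - chi' y) by ring.
by int_closure.
Qed.

Section ExtendAlongCycle.
Variables (A L : {group gT}) (phi : gT -> rat) (x : gT).
Hypotheses (sLA : L \subset A) (sA'L : A^`(1)%g \subset L).
Hypotheses (phiL : qz_morph L phi) (phiA' : {in A^`(1)%g, forall y, integral (phi y)}).
Hypothesis xA : x \in A.

Let nLA : (L <| A)%g := sub_der1_normal sA'L sLA.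
Let xN : x \in 'N(L)%g := subsetP (normal_norm nLA) x xA.
Let m := #[coset L x]%g.

Lemma memX_dvd_order_coset k : ((x ^+ k)%g \in L) = (m %| k)%N.
Proof.
rewrite /m order_dvdn -morphX //.
by apply/idP/eqP => [/coset_id | /(coset_idr (groupX k xN))].
Qed.

Lemma qz_morph_conj a l : a \in A -> l \in L ->
  integral (phi (a * (l * a^-1))%g - phi l).
Proof.
move=> aA lL; have cA : ([~ l, a^-1] \in A^`(1))%g.
  by rewrite derg1 mem_commg // ?groupV // (subsetP sLA).
have -> : (a * (l * a^-1))%g = (l * [~ l, a^-1])%g by rewrite /commg /conjg invgK mulVKg.
have phi_lc := phiL lL (subsetP sA'L _ cA); have phi_c := phiA' cA.
have -> : phi (l * [~ l, a^-1])%g - phi l =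
  (phi (l * [~ l, a^-1])%g - phi l - phi [~ l, a^-1]%g) + phi [~ l, a^-1]%g by ring.
by int_closure.
Qed.

(* phi (x ^+ m) / m is the value of the extension at x: Q/Z is divisible *)
Let al := phi (x ^+ m)%g / m%:R.

Lemma cycle_ext_wd y i j : (y * (x ^+ i)^-1 \in L)%g -> (y * (x ^+ j)^-1 \in L)%g ->
  integral ((phi (y * (x ^+ i)^-1)%g + i%:R * al) - (phi (y * (x ^+ j)^-1)%g + j%:R * al)).
Proof.
wlog le_ij : i j / (i <= j)%N.
  move=> wlog_ij yi yj; case: (leqP i j) => [|/ltnW] le; first exact: wlog_ij.
  by rewrite -opprB rpredN; apply: wlog_ij.
move=> yiL yjL; have xjiL : (x ^+ (j - i) \in L)%g.
  have -> : (x ^+ (j - i) = (y * (x ^+ j)^-1)^-1 * (y * (x ^+ i)^-1))%g.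
    by rewrite expgnFr // invgM invgK mulgA mulgVK.
  by rewrite groupM ?groupV.
have /dvdnP[q def_ji] : (m %| j - i)%N by rewrite -memX_dvd_order_coset.
have m_gt0 : (m%:R : rat) != 0 by rewrite pnatr_eq0 -lt0n order_gt0.
have xmL : (x ^+ m \in L)%g by rewrite memX_dvd_order_coset.
have -> : (y * (x ^+ i)^-1 = (y * (x ^+ j)^-1) * (x ^+ m) ^+ q)%g.
  by rewrite -expgM mulnC -def_ji expgnFr // mulgA mulgVK.
have phi_yx := phiL yjL (groupX q xmL); have phi_xmq := qz_morphX q phiL xmL.
have -> : (j%:R : rat) = i%:R + q%:R * m%:R by rewrite -natrM -def_ji -natrD subnKC.
have -> : phi (y * (x ^+ j)^-1 * (x ^+ m) ^+ q)%g + i%:R * al -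
    (phi (y * (x ^+ j)^-1)%g + (i%:R + q%:R * m%:R) * al) =
  (phi (y * (x ^+ j)^-1 * (x ^+ m) ^+ q)%g - phi (y * (x ^+ j)^-1)%g - phi ((x ^+ m) ^+ q)%g)
  + (phi ((x ^+ m) ^+ q)%g - q%:R * phi (x ^+ m)%g) by rewrite /al; field.
by int_closure.
Qed.

Lemma qz_morph_extend_cycle : qz_extendable (L <*> <[x]>)%g L phi.
Proof.
pose psi y := if [pick i : 'I_#[x]%g | (y * (x ^+ i)^-1 \in L)%g] is Some i
   then phi (y * (x ^+ i)^-1)%g + (i : nat)%:R * al else 0.
have psiE y i : (y * (x ^+ i)^-1 \in L)%g ->
    integral (psi y - (phi (y * (x ^+ i)^-1)%g + i%:R * al)).
  rewrite /psi; case: pickP => [i0 yi0 | no_i] yi; first exact: cycle_ext_wd.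
  by have := no_i (Ordinal (ltn_pmod i (order_gt0 x))); rewrite /= expg_mod_order yi.
have mem_join y : y \in (L <*> <[x]>)%g -> exists i, (y * (x ^+ i)^-1 \in L)%g.
  rewrite norm_joinEr ?cycle_subG // => /mulsgP[l _ lL /cycleP[i ->] ->].
  by exists i; rewrite mulgK.
exists psi; split=> [u v /mem_join[i ui] /mem_join[j vj] | l lL]; last first.
  by have := psiE l 0%N; rewrite expg0 invg1 mulg1 mul0r addr0; apply.
set l1 := (u * (x ^+ i)^-1)%g in ui *; set l2 := (v * (x ^+ j)^-1)%g in vj *.
set l2' := (x ^+ i * (l2 * (x ^+ i)^-1))%g.
have l2'L : l2' \in L.
  by rewrite /l2' -{1}[(x ^+ i)%g]invgK -/(conjg l2 _) memJ_norm // groupV groupX.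
have uvij : ((u * v) * (x ^+ (i + j))^-1 = l1 * l2')%g.
  by rewrite /l1 /l2' /l2 expgnDr invgM !mulgA mulgVK.
have psi_u := psiE _ _ ui; have psi_v := psiE _ _ vj; have phi_l12 := phiL ui l2'L.
have phi_l2' := qz_morph_conj (groupX i xA) vj.
have := psiE (u * v)%g (i + j)%N; rewrite uvij => /(_ (groupM ui l2'L)) psi_uv.
have -> : psi (u * v)%g - psi u - psi v =
  (psi (u * v)%g - (phi (l1 * l2')%g + (i + j)%:R * al))
  - (psi u - (phi l1 + i%:R * al)) - (psi v - (phi l2 + j%:R * al))
  + (phi (l1 * l2')%g - phi l1 - phi l2') + (phi l2' - phi l2) by rewrite natrD; ring.
by int_closure.
Qed.

End ExtendAlongCycle.

Lemma qz_morph_extend A L phi :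
  L \subset A -> A^`(1)%g \subset L -> qz_morph L phi ->
  {in A^`(1)%g, forall y, integral (phi y)} -> qz_extendable A L phi.
Proof.
move: {2}_.+1 (ltnSn (#|A| - #|L|)) => n.
elim: n L phi => // n IHn L phi lt_n sLA sA'L phiL phiA'.
have [sAL | /subsetPn[x xA xL]] := boolP (A \subset L).
  by exists phi; split=> [u v uA vA | l _]; [apply: phiL; apply: (subsetP sAL) | rewrite subrr].
have [psi [psiLx psi_phi]] := qz_morph_extend_cycle sLA sA'L phiL phiA' xA.
set Lx := (L <*> <[x]>)%G.
have sLLx : L \subset Lx := joing_subl _ _.
have sLxA : Lx \subset A by rewrite join_subG sLA cycle_subG.
have ltLx : (#|L| < #|Lx|)%N.
  apply: proper_card; apply/properP; split => //; exists x => //.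
  exact: (subsetP (joing_subr _ _)) _ (cycle_id x).
have psiA' : {in A^`(1)%g, forall y, integral (psi y)}.
  move=> y yA'; have psi_y := psi_phi y (subsetP sA'L _ yA'); have phi_y := phiA' y yA'.
  have -> : psi y = (psi y - phi y) + phi y by ring.
  by int_closure.
have [|th [thA th_psi]] := IHn Lx psi _ sLxA (subset_trans sA'L sLLx) psiLx psiA'.
  by have := subset_leq_card sLxA; move: lt_n ltLx; lia.
exists th; split => // l lL.
have th_l := th_psi l (subsetP sLLx _ lL); have psi_l := psi_phi l lL.
have -> : th l - phi l = (th l - psi l) + (psi l - phi l) by ring.
by int_closure.
Qed.

Section ExtendFromNormal.
Variables (G E : {group gT}) (phi : gT -> rat).
Hypotheses (nEG : (E <| G)%g) (phiE : qz_morph E phi).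
Hypothesis phiEG' : {in E :&: G^`(1)%g, forall y, integral (phi y)}.

Let sEG : E \subset G := normal_sub nEG.

(* The extension of phi to E G' that is trivial on G' *)
Let psi y := phi (repr [set e in E | (e^-1 * y)%g \in G^`(1)%g]).

Let psi_phi y e : e \in E -> (e^-1 * y \in G^`(1))%g -> integral (psi y - phi e).
Proof.
move=> eE eyG'; rewrite /psi; set S := [set e in E | _].
have : repr S \in S by apply: (mem_repr e); rewrite inE eE eyG'.
set s := repr S; rewrite inE => /andP[sE syG'].
have se : (s^-1 * e \in E :&: G^`(1))%g.
  rewrite inE groupM ?groupV //=.
  have -> : (s^-1 * e = (s^-1 * y) * (e^-1 * y)^-1)%g by rewrite invMg invgK !mulgA mulgK.
  by rewrite groupM ?groupV.
have phi_se := phiEG' se; have := phiE sE (groupM (groupVr sE) eE).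
rewrite mulKVg => phi_s_se.
have -> : phi s - phi e = - (phi e - phi s - phi (s^-1 * e)%g) - phi (s^-1 * e)%g by ring.
by int_closure.
Qed.

Let psi_qz_morph : qz_morph (E <*> G^`(1))%g psi.
Proof.
have mulEG' : (E <*> G^`(1))%g = (E * G^`(1))%g.
  by apply: norm_joinEr; apply: subset_trans (der_sub 1 G) (normal_norm nEG).
have memEG' y : y \in (E <*> G^`(1))%g -> exists2 e, e \in E & (e^-1 * y \in G^`(1))%g.
  by rewrite mulEG' => /mulsgP[e z eE zG' ->]; exists e; rewrite ?mulKg.
move=> y1 y2 /memEG'[e1 e1E y1G'] /memEG'[e2 e2E y2G'].
have y12G' : ((e1 * e2)^-1 * (y1 * y2) \in G^`(1))%g.
  have -> : ((e1 * e2)^-1 * (y1 * y2) = ((e1^-1 * y1) ^ e2) * (e2^-1 * y2))%g.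
    by rewrite /conjg invMg !mulgA mulgK.
  rewrite groupM // memJ_norm //.
  by rewrite (subsetP (normal_norm (der_normal 1 G))) // (subsetP sEG).
have psi_12 := psi_phi (groupM e1E e2E) y12G'.
have psi_1 := psi_phi e1E y1G'; have psi_2 := psi_phi e2E y2G'.
have phi_12 := phiE e1E e2E.
have -> : psi (y1 * y2)%g - psi y1 - psi y2 =
  (psi (y1 * y2)%g - phi (e1 * e2)%g) - (psi y1 - phi e1) - (psi y2 - phi e2)
  + (phi (e1 * e2)%g - phi e1 - phi e2) by ring.
by int_closure.
Qed.

Lemma qz_morph_extend_normal : qz_extendable G E phi.
Proof.
have psiG' : {in G^`(1)%g, forall y, integral (psi y)}.
  move=> y yG'; have := @psi_phi y 1%g (group1 E); rewrite invg1 mul1g => /(_ yG') psi_y.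
  have phi1 := qz_morph1 phiE.
  have -> : psi y = (psi y - phi 1%g) + phi 1%g by ring.
  by int_closure.
have sEG'G : (E <*> G^`(1))%G \subset G by rewrite join_subG sEG der_sub.
have [th [thG th_psi]] := qz_morph_extend sEG'G (joing_subr _ _) psi_qz_morph psiG'.
exists th; split => // e eE.
have th_e := th_psi e (subsetP (joing_subl _ _) _ eE).
have := @psi_phi e e eE; rewrite mulVg group1 => /(_ isT) psi_e.
have -> : th e - phi e = (th e - psi e) + (psi e - phi e) by ring.
by int_closure.
Qed.

End ExtendFromNormal.

Lemma qz_extendableP G E H phi : (E <| G)%g -> H \subset E -> qz_morph E phi ->
  {in H, forall h, integral (phi h)} ->
  qz_extendable G E phi <-> {in E :&: (H * G^`(1))%g, forall k, integral (phi k)}.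
Proof.
move=> nEG sHE phiE phiH; have sEG := normal_sub nEG; split.
  move=> [th [thG th_phi]] k /setIP[kE /mulsgP[h y hH yG' def_k]].
  have hE := subsetP sHE _ hH; have yG := subsetP (der_sub 1 G) _ yG'.
  have th_k := th_phi k kE; have th_h := th_phi h hE; have phi_h := phiH h hH.
  have th_y := qz_morph_der1 thG yG'; have th_hy := thG _ _ (subsetP sEG _ hE) yG.
  rewrite -def_k in th_hy.
  have -> : phi k = (th k - th h - th y) - (th k - phi k) + (th h - phi h) + phi h + th y by ring.
  by int_closure.
move=> phiK; apply: qz_morph_extend_normal => // y /setIP[yE yG'].
by apply: phiK; rewrite inE yE -[y]mul1g mem_mulg.
Qed.

End QZCharacters.

Section IntegralCochains.
Variable gT : finGroupType.
Implicit Types (A S D G E H : {group gT}) (c : cochain2 gT).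

Definition cochainQ c g1 g2 x : rat := (c g1 g2 x)%:~R.

Lemma cocycle_delta2_const A S D c : cocycle A S D c ->
  forall g1 g2 g3 x y, g1 \in D -> g2 \in D -> g3 \in D -> x \in A -> y \in A ->
  delta2 (cochainQ c) g1 g2 g3 x = delta2 (cochainQ c) g1 g2 g3 y.
Proof.
move=> [_ c_cocycle] g1 g2 g3 x y g1D g2D g3D xA yA.
have [n dc_n] := c_cocycle g1 g2 g3 g1D g2D g3D.
rewrite /delta2 /cochainQ -!rmorphB -!rmorphD -!rmorphB.
by rewrite (dc_n x xA) (dc_n y yA).
Qed.

Lemma cocycle_avg2_const A S D c : cocycle A S D c ->
  forall g1 g2 x y, g1 \in D -> g2 \in D -> x \in A -> y \in A ->
  cochainQ c g1 g2 x - delta1 (avg2 D (cochainQ c)) g1 g2 x =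
  cochainQ c g1 g2 y - delta1 (avg2 D (cochainQ c)) g1 g2 y.
Proof. by move/cocycle_delta2_const; apply: avg2_const. Qed.

Lemma cocycle_avg2Mr A S D c g x s : cocycle A S D c ->
  g \in D -> x \in A -> s \in S ->
  avg2 D (cochainQ c) g (x * s)%g = avg2 D (cochainQ c) g x.
Proof.
move=> [c_ind _] gD xA sS; apply: eq_avg2 => k kD.
by rewrite /cochainQ; case: (c_ind g k gD kD) => _ ->.
Qed.

Lemma coboundary_lift A S D c : coboundary A S D c ->
  exists b : gT -> gT -> rat,
   [/\ forall g x, g \in D -> x \notin A -> b g x = 0,
       forall g x s, g \in D -> x \in A -> s \in S -> b g (x * s)%g = b g x,
       forall g x, integral (b g x) &
       forall g1 g2 x y, g1 \in D -> g2 \in D -> x \in A -> y \in A ->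
          cochainQ c g1 g2 x - delta1 b g1 g2 x = cochainQ c g1 g2 y - delta1 b g1 g2 y].
Proof.
move=> [b [b_ind c_db]]; exists (fun g x => (b g x)%:~R); split.
- by move=> g x gD xA; case: (b_ind g gD) => b0 _; rewrite b0.
- by move=> g x s gD xA sS; case: (b_ind g gD) => _ bS; rewrite bS.
- by move=> g x; apply: intr_int.
move=> g1 g2 x y g1D g2D xA yA; have [n c_db_n] := c_db g1 g2 g1D g2D.
rewrite /delta1 /cochainQ -!rmorphB -!rmorphD -!rmorphB.
by rewrite (c_db_n x xA) (c_db_n y yA).
Qed.

Lemma coboundary_of_lift A S D c (b : gT -> gT -> rat) :
  (forall g x, g \in D -> x \notin A -> b g x = 0) ->
  (forall g x s, g \in D -> x \in A -> s \in S -> b g (x * s)%g = b g x) ->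
  (forall g x, g \in D -> integral (b g x)) ->
  (forall g1 g2 x, g1 \in D -> g2 \in D -> x \in A ->
     cochainQ c g1 g2 x - delta1 b g1 g2 x = cochainQ c g1 g2 1%g - delta1 b g1 g2 1%g) ->
  coboundary A S D c.
Proof.
move=> b0 bS b_int c_db.
exists (fun g x => Num.floor (b g x)); split.
  move=> g gD; split=> [x xA | x s xA sS]; first by rewrite b0 // floor0.
  by rewrite bS.
move=> g1 g2 g1D g2D; exists (c g1 g2 1%g - (Num.floor (b g2 (g1^-1 * 1)%g)
  - Num.floor (b (g1 * g2)%g 1%g) + Num.floor (b g1 1%g))).
move=> x xA; apply: (@intr_inj rat).
rewrite !(intrD, intrN) !floorK ?b_int ?groupM //.
by have := c_db g1 g2 x g1D g2D xA; rewrite /delta1 /cochainQ.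
Qed.

Lemma eq_coboundary (A S D : {set gT}) c c' : coboundary A S D c ->
  (forall g1 g2 x, g1 \in D -> g2 \in D -> x \in A -> c g1 g2 x = c' g1 g2 x) ->
  coboundary A S D c'.
Proof.
move=> [b [b_ind c_db]] eq_c; exists b; split => // g1 g2 g1D g2D.
by have [n c_db_n] := c_db g1 g2 g1D g2D; exists n => x xA; rewrite -eq_c // c_db_n.
Qed.

Lemma cohomologous_trans (A S D : {set gT}) c1 c2 c3 :
  cohomologous A S D c1 c2 -> cohomologous A S D c2 c3 -> cohomologous A S D c1 c3.
Proof.
move=> [b12 [b12_ind c12_db]] [b23 [b23_ind c23_db]].
exists (fun g x => b12 g x + b23 g x); split.
  move=> g gD; have [b12_0 b12_S] := b12_ind g gD; have [b23_0 b23_S] := b23_ind g gD.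
  by split=> [x xA | x s xA sS]; [rewrite b12_0 ?b23_0 ?addr0 | rewrite b12_S ?b23_S].
move=> g1 g2 g1D g2D.
have [n12 e12] := c12_db g1 g2 g1D g2D; have [n23 e23] := c23_db g1 g2 g1D g2D.
by exists (n12 + n23) => x xA; rewrite -(e12 x xA) -(e23 x xA); ring.
Qed.

Definition restr (E : {set gT}) c : cochain2 gT :=
  fun g1 g2 x => if x \in E then c g1 g2 x else 0.

Lemma cocycle_restr G E H c : H \subset E -> E \subset G ->
  cocycle G H G c -> cocycle E H E (restr E c).
Proof.
move=> sHE sEG [c_ind c_cocycle].
split=> [g1 g2 g1E g2E | g1 g2 g3 g1E g2E g3E].
  have [_ cH] := c_ind g1 g2 (subsetP sEG _ g1E) (subsetP sEG _ g2E).
  split=> [x /negbTE xE | x h xE hH]; first by rewrite /restr xE.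
  have xhE : (x * h)%g \in E by rewrite groupM // (subsetP sHE).
  by rewrite /restr xhE xE cH // (subsetP sEG).
have [n dc_n] := c_cocycle g1 g2 g3 (subsetP sEG _ g1E) (subsetP sEG _ g2E) (subsetP sEG _ g3E).
exists n => x xE; have gxE : (g1^-1 * x)%g \in E by rewrite groupM ?groupV.
by rewrite /restr xE gxE dc_n ?(subsetP sEG).
Qed.

Lemma coboundary_restr G E H D c : H \subset E -> E \subset G -> D \subset E ->
  coboundary G H D c -> coboundary E H D (restr E c).
Proof.
move=> sHE sEG sDE [b [b_ind c_db]].
exists (fun g x => if x \in E then b g x else 0); split=> [g gD | g1 g2 g1D g2D].
  have [_ bH] := b_ind g gD.
  split=> [x /negbTE xE | x h xE hH]; first by rewrite xE.
  have xhE : (x * h)%g \in E by rewrite groupM // (subsetP sHE).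
  by rewrite xhE xE bH // (subsetP sEG).
have [n c_db_n] := c_db g1 g2 g1D g2D.
exists n => x xE; have gxE : (g1^-1 * x)%g \in E by rewrite groupM ?groupV // (subsetP sDE).
by rewrite /restr /= xE gxE c_db_n ?(subsetP sEG).
Qed.

End IntegralCochains.

Section ConnectingMap.
Variables (gT : finGroupType) (G E H : {group gT}).
Hypotheses (nEG : (E <| G)%g) (sHE : H \subset E).

Let sEG : E \subset G := normal_sub nEG.
Let sHG : H \subset G := subset_trans sHE sEG.

Definition tr x := repr (x *: E)%g.

Lemma tr_lcoset x : (x^-1 * tr x \in E)%g.
Proof. by rewrite -mem_lcoset; apply: (mem_repr x); rewrite mem_lcoset mulVg group1. Qed.

Lemma trV_mul x : ((tr x)^-1 * x \in E)%g.
Proof. by rewrite -[X in X \in _]invgK invMg invgK groupV tr_lcoset. Qed.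

Lemma trMr x e : e \in E -> tr (x * e)%g = tr x.
Proof. by move=> eE; rewrite /tr lcosetM lcoset_id. Qed.

Lemma tr_in x : x \in G -> tr x \in G.
Proof. by move=> xG; rewrite -(mulKVg x (tr x)) groupM // (subsetP sEG) ?tr_lcoset. Qed.

Lemma notin_groupVMl g x : g \in G -> x \notin G -> (g^-1 * x)%g \notin G.
Proof. by move=> gG; rewrite groupMl ?groupV. Qed.

(* Through Psi below, these F give exactly the classes in the kernel of j_* *)
Definition adm (F : gT -> rat) :=
  (forall x h, x \in G -> h \in H -> F (x * h)%g = F x) /\
  (forall x e, x \in G -> e \in E -> integral (F (x * e)%g - F x - F e + F 1%g)).

Lemma admD F1 F2 : adm F1 -> adm F2 -> adm (fun y => F1 y + F2 y).
Proof.
move=> [F1H F1E] [F2H F2E]; split=> [x h xG hH | x e xG eE]; first by rewrite F1H ?F2H.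
have -> : F1 (x * e)%g + F2 (x * e)%g - (F1 x + F2 x) - (F1 e + F2 e) + (F1 1%g + F2 1%g) =
  (F1 (x * e)%g - F1 x - F1 e + F1 1%g) + (F2 (x * e)%g - F2 x - F2 e + F2 1%g) by ring.
by rewrite rpredD ?F1E ?F2E.
Qed.

Lemma admB F1 F2 : adm F1 -> adm F2 -> adm (fun y => F1 y - F2 y).
Proof.
move=> [F1H F1E] [F2H F2E]; split=> [x h xG hH | x e xG eE]; first by rewrite F1H ?F2H.
have -> : F1 (x * e)%g - F2 (x * e)%g - (F1 x - F2 x) - (F1 e - F2 e) + (F1 1%g - F2 1%g) =
  (F1 (x * e)%g - F1 x - F1 e + F1 1%g) - (F2 (x * e)%g - F2 x - F2 e + F2 1%g) by ring.
by rewrite rpredB ?F1E ?F2E.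
Qed.

(* gam F is constant on the cosets xE, and differs by integers from the
   J_{G/H}-valued 1-cochain g |-> F - g.F *)
Definition gam (F : gT -> rat) g x := if x \in G then F (tr x) - F (g^-1 * tr x)%g else 0.

Lemma gam_int F g x : adm F -> g \in G -> x \in G ->
  integral (gam F g x - (F x - F (g^-1 * x)%g)).
Proof.
move=> [_ FE] gG xG; rewrite /gam xG.
have trxG := tr_in xG; have trx := trV_mul x.
have F_x := FE _ _ trxG trx; have F_gx := FE _ _ (groupM (groupVr gG) trxG) trx.
rewrite mulKVg in F_x; rewrite -mulgA mulKVg in F_gx.
have -> : F (tr x) - F (g^-1 * tr x)%g - (F x - F (g^-1 * x)%g) =
  - (F x - F (tr x) - F ((tr x)^-1 * x)%g + F 1%g) +
  (F (g^-1 * x)%g - F (g^-1 * tr x)%g - F ((tr x)^-1 * x)%g + F 1%g) by ring.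
by int_closure.
Qed.

Lemma gamMr F g x e : x \in G -> e \in E -> gam F g (x * e)%g = gam F g x.
Proof. by move=> xG eE; rewrite /gam groupM ?xG ?(subsetP sEG) // trMr. Qed.

Lemma gam_out F g x : x \notin G -> gam F g x = 0.
Proof. by rewrite /gam => /negbTE ->. Qed.

Lemma gamD F1 F2 g x : gam (fun y => F1 y + F2 y) g x = gam F1 g x + gam F2 g x.
Proof. by rewrite /gam; case: ifP => _; [ring | rewrite addr0]. Qed.

Lemma gamB F1 F2 g x : gam (fun y => F1 y - F2 y) g x = gam F1 g x - gam F2 g x.
Proof. by rewrite /gam; case: ifP => _; [ring | rewrite subrr]. Qed.

Definition PsiQ F := delta1 (gam F).

Lemma PsiQ_int F g1 g2 x : adm F -> g1 \in G -> g2 \in G -> integral (PsiQ F g1 g2 x).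
Proof.
move=> admF g1G g2G; rewrite /PsiQ /delta1.
have [xG | xG] := boolP (x \in G); last first.
  by rewrite !gam_out ?notin_groupVMl // subrr add0r rpred0.
have gam_2 := gam_int admF g2G (groupM (groupVr g1G) xG).
have gam_12 := gam_int admF (groupM g1G g2G) xG; have gam_1 := gam_int admF g1G xG.
rewrite invMg -mulgA in gam_12.
have -> : gam F g2 (g1^-1 * x)%g - gam F (g1 * g2)%g x + gam F g1 x =
  (gam F g2 (g1^-1 * x)%g - (F (g1^-1 * x)%g - F (g2^-1 * (g1^-1 * x))%g))
  - (gam F (g1 * g2)%g x - (F x - F (g2^-1 * (g1^-1 * x))%g))
  + (gam F g1 x - (F x - F (g1^-1 * x)%g)) by ring.
by int_closure.
Qed.

Lemma PsiQ_out F g1 g2 x : g1 \in G -> x \notin G -> PsiQ F g1 g2 x = 0.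
Proof. by move=> g1G xG; rewrite /PsiQ /delta1 !gam_out ?notin_groupVMl // subrr add0r. Qed.

Lemma PsiQMr F g1 g2 x e : g1 \in G -> x \in G -> e \in E ->
  PsiQ F g1 g2 (x * e)%g = PsiQ F g1 g2 x.
Proof.
move=> g1G xG eE; have gxG : (g1^-1 * x)%g \in G by rewrite groupM ?groupV.
by rewrite /PsiQ /delta1 mulgA !(gamMr _ _ _ eE).
Qed.

Definition Psi F : cochain2 gT := fun g1 g2 x => Num.floor (PsiQ F g1 g2 x).

Lemma PsiK F g1 g2 x : adm F -> g1 \in G -> g2 \in G ->
  cochainQ (Psi F) g1 g2 x = PsiQ F g1 g2 x.
Proof. by move=> admF g1G g2G; rewrite /cochainQ /Psi floorK // PsiQ_int. Qed.

Lemma PsiD F1 F2 g1 g2 x : adm F1 -> adm F2 -> g1 \in G -> g2 \in G ->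
  Psi (fun y => F1 y + F2 y) g1 g2 x = Psi F1 g1 g2 x + Psi F2 g1 g2 x.
Proof.
move=> admF1 admF2 g1G g2G; have admF12 := admD admF1 admF2.
apply: (@intr_inj rat); rewrite intrD -!/(cochainQ _ _ _ _) !PsiK //.
by rewrite /PsiQ /delta1 !gamD; ring.
Qed.

Lemma PsiB F1 F2 g1 g2 x : adm F1 -> adm F2 -> g1 \in G -> g2 \in G ->
  Psi (fun y => F1 y - F2 y) g1 g2 x = Psi F1 g1 g2 x - Psi F2 g1 g2 x.
Proof.
move=> admF1 admF2 g1G g2G; have admF12 := admB admF1 admF2.
apply: (@intr_inj rat); rewrite intrD intrN -!/(cochainQ _ _ _ _) !PsiK //.
by rewrite /PsiQ /delta1 !gamB; ring.
Qed.

Lemma Psi_cocycle F : adm F -> cocycle G E G (Psi F).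
Proof.
move=> admF; split=> [g1 g2 g1G g2G | g1 g2 g3 g1G g2G g3G].
  by split=> [x xG | x e xG eE]; rewrite /Psi; [rewrite PsiQ_out ?floor0 | rewrite PsiQMr].
exists 0 => x xG; apply: (@intr_inj rat).
rewrite !(intrD, intrN) -!/(cochainQ _ _ _ _) !PsiK ?groupM //.
by have := delta2_delta1 (gam F) g1 g2 g3 x; rewrite /delta2 /PsiQ.
Qed.

Lemma Psi_trivialH F : adm F -> coboundary G H G (Psi F).
Proof.
move=> admF; have [FH _] := admF.
pose b g x := if x \in G then gam F g x + F (g^-1 * x)%g - F x else 0.
apply: (coboundary_of_lift (b := b)).
- by move=> g x gG /negbTE xG; rewrite /b xG.
- move=> g x h gG xG hH; have hE := subsetP sHE _ hH.
  have gxG : (g^-1 * x)%g \in G by rewrite groupM ?groupV.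
  have xhG : (x * h)%g \in G by rewrite groupM // (subsetP sHG).
  by rewrite /b xhG xG gamMr // mulgA (FH _ _ gxG hH) (FH _ _ xG hH).
- move=> g x gG; rewrite /b; case: ifP => xG; last exact: rpred0.
  have := gam_int admF gG xG.
  by have -> : gam F g x + F (g^-1 * x)%g - F x = gam F g x - (F x - F (g^-1 * x)%g) by ring.
move=> g1 g2 x g1G g2G xG.
suff Psi_db y : y \in G -> cochainQ (Psi F) g1 g2 y - delta1 b g1 g2 y = 0.
  by rewrite !Psi_db.
move=> yG; rewrite PsiK // /PsiQ /delta1 /b yG !groupM ?groupV // invMg -!mulgA; ring.
Qed.

Lemma adm_qz_morph F : adm F -> qz_morph E (fun e => F e - F 1%g).
Proof.
move=> [_ FE] x y xE yE; have := FE x y (subsetP sEG _ xE) yE.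
by have -> : F (x * y)%g - F 1%g - (F x - F 1%g) - (F y - F 1%g) =
  F (x * y)%g - F x - F y + F 1%g by ring.
Qed.

Lemma Psi_trivialE F : adm F -> qz_extendable G E (fun e => F e - F 1%g) ->
  coboundary G E G (Psi F).
Proof.
move=> admF [th [thG th_F]]; have [_ FE] := admF.
pose u y := F y - th y.
have u_tr y : y \in G -> integral (u (tr y) - u y).
  move=> yG; have trE := trV_mul y; have tryG := tr_in yG.
  have F_tr := FE _ _ tryG trE; have th_tr := thG _ _ tryG (subsetP sEG _ trE).
  have th_F_tr := th_F _ trE; rewrite mulKVg in F_tr th_tr.
  have -> : u (tr y) - u y = - (F y - F (tr y) - F ((tr y)^-1 * y)%g + F 1%g)
     + (th y - th (tr y) - th ((tr y)^-1 * y)%g)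
     + (th ((tr y)^-1 * y)%g - (F ((tr y)^-1 * y)%g - F 1%g)) by rewrite /u; ring.
  by int_closure.
pose b g x := if x \in G then gam F g x - (u (tr x) - u (tr (g^-1 * x)%g) + th g) else 0.
apply: (coboundary_of_lift (b := b)).
- by move=> g x gG /negbTE xG; rewrite /b xG.
- move=> g x e gG xG eE; have xeG : (x * e)%g \in G by rewrite groupM // (subsetP sEG).
  by rewrite /b xeG xG gamMr // mulgA !(trMr _ eE).
- move=> g x gG; rewrite /b; case: ifP => xG; last exact: rpred0.
  have gxG : (g^-1 * x)%g \in G by rewrite groupM ?groupV.
  have gam_x := gam_int admF gG xG; have u_x := u_tr x xG; have u_gx := u_tr _ gxG.
  have th_g_gx := thG _ _ gG gxG; rewrite mulKVg in th_g_gx.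
  have -> : gam F g x - (u (tr x) - u (tr (g^-1 * x)%g) + th g) =
    (gam F g x - (F x - F (g^-1 * x)%g)) - (u (tr x) - u x)
    + (u (tr (g^-1 * x)%g) - u (g^-1 * x)%g) + (th x - th g - th (g^-1 * x)%g) by rewrite /u; ring.
  by int_closure.
move=> g1 g2 x g1G g2G xG.
suff Psi_db y : y \in G ->
    cochainQ (Psi F) g1 g2 y - delta1 b g1 g2 y = th g2 - th (g1 * g2)%g + th g1.
  by rewrite !Psi_db.
move=> yG; have gyG : (g1^-1 * y)%g \in G by rewrite groupM ?groupV.
by rewrite PsiK ?groupM // /PsiQ /delta1 /b yG gyG invMg -!mulgA; ring.
Qed.

Lemma Psi_trivialE_extendable F : adm F -> coboundary G E G (Psi F) ->
  qz_extendable G E (fun e => F e - F 1%g).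
Proof.
move=> admF PsiF_triv; have [_ FE] := admF.
have [b [_ bE b_int Psi_db]] := coboundary_lift PsiF_triv.
pose z g x := gam F g x - b g x.
have z_const g1 g2 x y : g1 \in G -> g2 \in G -> x \in G -> y \in G ->
    z (g1 * g2)%g x - z g1 x - z g2 (g1^-1 * x)%g =
    z (g1 * g2)%g y - z g1 y - z g2 (g1^-1 * y)%g.
  move=> g1G g2G xG yG.
  suff zE t : z (g1 * g2)%g t - z g1 t - z g2 (g1^-1 * t)%g =
      - (cochainQ (Psi F) g1 g2 t - delta1 b g1 g2 t).
    by rewrite !zE (Psi_db g1 g2 x y).
  by rewrite PsiK // /PsiQ /delta1 /z; ring.
pose u x := F x + avg1 G z x.
exists (fun g => u 1%g - u g^-1%g); split=> [|e eE].
  apply: qz_morph_transl => g x gG xG.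
  have avg_x := avg1_const z_const gG xG (group1 G); rewrite mulg1 in avg_x.
  have gam_x := gam_int admF gG xG; have gam_1 := gam_int admF gG (group1 G).
  have b_x := b_int g x; have b_1 := b_int g 1%g; rewrite mulg1 in gam_1.
  have -> : u x - u (g^-1 * x)%g - (u 1%g - u g^-1%g) =
    - (gam F g x - (F x - F (g^-1 * x)%g)) + (gam F g 1%g - (F 1%g - F g^-1%g))
    + b g x - b g 1%g
    + ((z g x - (avg1 G z (g^-1 * x)%g - avg1 G z x))
       - (z g 1%g - (avg1 G z g^-1%g - avg1 G z 1%g))) by rewrite /u /z; ring.
  by rewrite avg_x subrr addr0; int_closure.
have avgE : avg1 G z e^-1%g = avg1 G z 1%g.
  rewrite -[e^-1%g]mul1g; apply: eq_avg1 => k kG.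
  by rewrite /z gamMr ?groupV // (bE _ _ _ kG (group1 G) (groupVr eE)).
have F_e := FE _ _ (subsetP sEG _ (groupVr eE)) eE; rewrite mulVg in F_e.
rewrite /u avgE.
by have -> : F 1%g + avg1 G z 1%g - (F e^-1%g + avg1 G z 1%g) - (F e - F 1%g) =
  F 1%g - F e^-1%g - F e + F 1%g by ring.
Qed.

Lemma Psi_trivialEP F : adm F ->
  coboundary G E G (Psi F) <-> {in E :&: (H * G^`(1))%g, forall k, integral (F k - F 1%g)}.
Proof.
move=> admF; have [FH _] := admF.
have FH1 h : h \in H -> integral (F h - F 1%g).
  by move=> hH; rewrite -[h]mul1g FH ?group1 // subrr rpred0.
rewrite -(qz_extendableP nEG sHE (adm_qz_morph admF) FH1).
by split; [apply: Psi_trivialE_extendable | apply: Psi_trivialE].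
Qed.

Section KernelImage.
Variables (c : cochain2 gT) (b : gT -> gT -> rat).
Hypothesis c_cocycle : cocycle G E G c.
Hypothesis bH : forall g x h, g \in G -> x \in G -> h \in H -> b g (x * h)%g = b g x.
Hypothesis b_int : forall g x, integral (b g x).
Hypothesis c_db : forall g1 g2 x y, g1 \in G -> g2 \in G -> x \in G -> y \in G ->
  cochainQ c g1 g2 x - delta1 b g1 g2 x = cochainQ c g1 g2 y - delta1 b g1 g2 y.

Let be := avg2 G (cochainQ c).
Let z g x := b g x - be g x.
(* b and be trivialize c over Z (H-invariantly) and over Q (E-invariantly);
   their difference z is a 1-cocycle modulo constants, hence a coboundary *)
Let v := avg1 G z.

Let v_transl g x y : g \in G -> x \in G -> y \in G ->
  z g x - (v (g^-1 * x)%g - v x) = z g y - (v (g^-1 * y)%g - v y).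
Proof.
apply: avg1_const => g1 g2 {}x {}y g1G g2G xG yG.
suff zE t : z (g1 * g2)%g t - z g1 t - z g2 (g1^-1 * t)%g =
    (cochainQ c g1 g2 t - delta1 b g1 g2 t) - (cochainQ c g1 g2 t - delta1 be g1 g2 t).
  by rewrite !zE (c_db g1G g2G xG yG) (cocycle_avg2_const c_cocycle g1G g2G xG yG).
by rewrite /delta1 /z; ring.
Qed.

Lemma ker_adm : adm v.
Proof.
split=> [x h xG hH | x e xG eE].
  apply: eq_avg1 => k kG.
  by rewrite /z /be bH // (cocycle_avg2Mr c_cocycle) // (subsetP sHE).
have := v_transl (groupVr xG) (subsetP sEG _ eE) (group1 G); rewrite invgK mulg1 => v_xe.
have be_e : be x^-1%g e = be x^-1%g 1%g.
  by rewrite /be -[e]mul1g (cocycle_avg2Mr c_cocycle) ?group1 ?groupV.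
have b_e := b_int x^-1%g e; have b_1 := b_int x^-1%g 1%g.
have -> : v (x * e)%g - v x - v e + v 1%g =
  (b x^-1%g e - b x^-1%g 1%g) - (be x^-1%g e - be x^-1%g 1%g)
  - ((z x^-1%g e - (v (x * e)%g - v e)) - (z x^-1%g 1%g - (v x - v 1%g))) by rewrite /z; ring.
by rewrite v_xe be_e !subrr subr0; int_closure.
Qed.

Lemma ker_cohomologous_Psi : cohomologous G E G c (Psi v).
Proof.
pose ka g := z g 1%g - (v (g^-1 * 1)%g - v 1%g).
pose b' g x := if x \in G then be g x + ka g - gam v g x else 0.
apply: (coboundary_of_lift (b := b')).
- by move=> g x gG /negbTE xG; rewrite /b' xG.
- move=> g x e gG xG eE; have xeG : (x * e)%g \in G by rewrite groupM // (subsetP sEG).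
  by rewrite /b' /be xeG xG gamMr // (cocycle_avg2Mr c_cocycle).
- move=> g x gG; rewrite /b'; case: ifP => xG; last exact: rpred0.
  have gam_x := gam_int ker_adm gG xG; have b_x := b_int g x.
  have -> : be g x + ka g - gam v g x =
    b g x - (gam v g x - (v x - v (g^-1 * x)%g))
    - ((z g x - (v (g^-1 * x)%g - v x)) - ka g) by rewrite /z; ring.
  by rewrite (v_transl _ xG (group1 G)) // subrr subr0; int_closure.
move=> g1 g2 x g1G g2G xG.
suff c_db' y : y \in G ->
    cochainQ (fun g1 g2 x => c g1 g2 x - Psi v g1 g2 x) g1 g2 y - delta1 b' g1 g2 y =
    (cochainQ c g1 g2 y - delta1 be g1 g2 y) - (ka g2 - ka (g1 * g2)%g + ka g1).
  by rewrite !c_db' ?group1 // (cocycle_avg2_const c_cocycle g1G g2G xG (group1 G)).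
move=> yG; have gyG : (g1^-1 * y)%g \in G by rewrite groupM ?groupV.
have := PsiK y ker_adm g1G g2G; rewrite /cochainQ intrD intrN => ->.
by rewrite /PsiQ /delta1 /b' yG gyG; ring.
Qed.

End KernelImage.

Lemma ker_Psi c : cocycle G E G c -> coboundary G H G c ->
  exists F, adm F /\ cohomologous G E G c (Psi F).
Proof.
move=> c_cocycle /coboundary_lift[b [_ bH b_int c_db]].
exists (avg1 G (fun g x => b g x - avg2 G (cochainQ c) g x)).
by split; [apply: ker_adm | apply: ker_cohomologous_Psi].
Qed.

Lemma sha_restr c : sha_omega_trivial E H -> cocycle G H G c ->
  (forall C : {group gT}, C \subset G -> cyclic C -> coboundary G H C c) ->
  coboundary E H E (restr E c).
Proof.
move=> sha c_cocycle c_loc; apply: sha; first exact: cocycle_restr sHE sEG c_cocycle.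
move=> C sCE cycC; apply: (coboundary_restr sHE sEG sCE).
exact: c_loc (subset_trans sCE sEG) cycC.
Qed.

Lemma sha_lift c : cocycle G H G c -> coboundary E H E (restr E c) ->
  exists w ka : gT -> rat,
    (forall y h, y \in E -> h \in H -> w (y * h)%g = w y) /\
    (forall e y, e \in E -> y \in E ->
       integral (avg2 G (cochainQ c) e y - w (e^-1 * y)%g + w y - ka e)).
Proof.
move=> c_cocycle /coboundary_lift[a [_ aH a_int a_db]].
pose zE g y := avg2 G (cochainQ c) g y - a g y.
have zE_const g1 g2 x y : g1 \in E -> g2 \in E -> x \in E -> y \in E ->
    zE (g1 * g2)%g x - zE g1 x - zE g2 (g1^-1 * x)%g =
    zE (g1 * g2)%g y - zE g1 y - zE g2 (g1^-1 * y)%g.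
  move=> g1E g2E xE yE; have [g1G g2G] := (subsetP sEG _ g1E, subsetP sEG _ g2E).
  suff zEE t : t \in E -> zE (g1 * g2)%g t - zE g1 t - zE g2 (g1^-1 * t)%g =
      (cochainQ c g1 g2 t - delta1 (avg2 G (cochainQ c)) g1 g2 t)
      - (cochainQ (restr E c) g1 g2 t - delta1 a g1 g2 t).
    rewrite !zEE // (a_db g1 g2 x y) //.
    by rewrite (cocycle_avg2_const c_cocycle g1G g2G (subsetP sEG _ xE) (subsetP sEG _ yE)).
  by move=> tE; rewrite /delta1 /zE /cochainQ /restr tE; ring.
exists (avg1 E zE), (fun e => zE e 1%g - (avg1 E zE e^-1%g - avg1 E zE 1%g)).
split=> [y h yE hH | e y eE yE].
  apply: eq_avg1 => k kE.
  by rewrite /zE (cocycle_avg2Mr c_cocycle) ?(subsetP sEG) // aH.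
have := avg1_const zE_const eE yE (group1 E); rewrite mulg1 => w_const.
have -> : avg2 G (cochainQ c) e y - avg1 E zE (e^-1 * y)%g + avg1 E zE y
    - (zE e 1%g - (avg1 E zE e^-1%g - avg1 E zE 1%g)) = a e y.
  by rewrite -w_const /zE; ring.
exact: a_int.
Qed.

Section SelmerLift.
Variables (c : cochain2 gT) (w ka : gT -> rat).
Hypothesis c_cocycle : cocycle G H G c.
Hypothesis wH : forall y h, y \in E -> h \in H -> w (y * h)%g = w y.
Hypothesis w_be : forall e y, e \in E -> y \in E ->
  integral (avg2 G (cochainQ c) e y - w (e^-1 * y)%g + w y - ka e).

Let be := avg2 G (cochainQ c).
Let cst g1 g2 := cochainQ c g1 g2 1%g - delta1 be g1 g2 1%g.

Let be_mul g1 g2 x : g1 \in G -> g2 \in G -> x \in G ->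
  be (g1 * g2)%g x = be g1 x + be g2 (g1^-1 * x)%g - cochainQ c g1 g2 x + cst g1 g2.
Proof.
move=> g1G g2G xG; have := cocycle_avg2_const c_cocycle g1G g2G xG (group1 G).
by rewrite /cst /be /delta1 => ?; lra.
Qed.

(* As g * tr (g^-1 x) = tr x * ee g x with ee g x in E, be_mul moves be g x
   along the transversal to be (ee g x) on E, where w_be applies; the rest,
   La g x, only depends on the coset x E *)
Let F x := w ((tr x)^-1 * x)%g - be (tr x) x.
Let ee g x := ((tr x)^-1 * g * tr (g^-1 * x))%g.
Let La g x := ka (ee g x) + cst (tr x) (ee g x) - cst g (tr (g^-1 * x)%g).
Let b g x := if x \in G then be g x - F (g^-1 * x)%g + F x - La g x else 0.

Let ee_in g x : ee g x \in E.
Proof.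
have -> : ee g x = ((x^-1 * tr x)^-1 * ((g^-1 * x)^-1 * tr (g^-1 * x)))%g.
  by rewrite /ee !invMg !invgK !mulgA mulgK.
by rewrite groupM ?groupV ?tr_lcoset.
Qed.

Let LaMr g x e : e \in E -> La g (x * e)%g = La g x.
Proof. by move=> eE; rewrite /La /ee !mulgA !(trMr _ eE). Qed.

Let FMr x h : x \in G -> h \in H -> F (x * h)%g = F x.
Proof.
move=> xG hH; have hE := subsetP sHE _ hH.
by rewrite /F /be (trMr _ hE) mulgA wH ?trV_mul // (cocycle_avg2Mr c_cocycle) ?tr_in.
Qed.

Let b_int g x : g \in G -> integral (b g x).
Proof.
move=> gG; rewrite /b; case: ifP => xG; last exact: rpred0.
have gxG : (g^-1 * x)%g \in G by rewrite groupM ?groupV.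
have be_g := be_mul gG (tr_in gxG) xG.
have be_tr := be_mul (tr_in xG) (subsetP sEG _ (ee_in g x)) xG.
have tr_ee : (tr x * ee g x = g * tr (g^-1 * x))%g by rewrite /ee !mulgA mulgV mul1g.
rewrite tr_ee in be_tr.
have w_ee := w_be (ee_in g x) (trV_mul x).
have ee_tr : ((ee g x)^-1 * ((tr x)^-1 * x) = (tr (g^-1 * x))^-1 * (g^-1 * x))%g.
  by rewrite /ee !invMg !invgK !mulgA mulgK.
rewrite ee_tr in w_ee.
have c_g : integral (cochainQ c g (tr (g^-1 * x)%g) x) by apply: intr_int.
have c_tr : integral (cochainQ c (tr x) (ee g x) x) by apply: intr_int.
have -> : be g x - F (g^-1 * x)%g + F x - La g x =
  (be (ee g x) ((tr x)^-1 * x)%g - w ((tr (g^-1 * x))^-1 * (g^-1 * x))%g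
    + w ((tr x)^-1 * x)%g - ka (ee g x))
  + cochainQ c g (tr (g^-1 * x)%g) x - cochainQ c (tr x) (ee g x) x.
  by rewrite /F /La; lra.
by int_closure.
Qed.

Let bMr g x h : g \in G -> x \in G -> h \in H -> b g (x * h)%g = b g x.
Proof.
move=> gG xG hH; have hE := subsetP sHE _ hH.
have xhG : (x * h)%g \in G by rewrite groupM // (subsetP sHG).
have gxG : (g^-1 * x)%g \in G by rewrite groupM ?groupV.
rewrite /b xhG xG (LaMr _ _ hE) /be (cocycle_avg2Mr c_cocycle) //.
by rewrite mulgA (FMr gxG hH) (FMr xG hH).
Qed.

Let bZ g x := Num.floor (b g x).
Let c' : cochain2 gT :=
  fun g1 g2 x => c g1 g2 x - (bZ g2 (g1^-1 * x)%g - bZ (g1 * g2)%g x + bZ g1 x).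

Let c'_rat g1 g2 x : g1 \in G -> g2 \in G -> x \in G ->
  (c' g1 g2 x)%:~R = cst g1 g2 + delta1 La g1 g2 x.
Proof.
move=> g1G g2G xG; have gxG : (g1^-1 * x)%g \in G by rewrite groupM ?groupV.
have := cocycle_avg2_const c_cocycle g1G g2G xG (group1 G).
rewrite /c' /bZ !(intrD, intrN) !floorK ?b_int ?groupM // /b xG gxG /cst /be /delta1.
by rewrite invMg -[(g2^-1 * g1^-1 * x)%g]mulgA /cochainQ => ?; lra.
Qed.

Let c'_cocycle : cocycle G E G c'.
Proof.
have [c_ind _] := c_cocycle.
split=> [g1 g2 g1G g2G | g1 g2 g3 g1G g2G g3G].
  split=> [x xG | x e xG eE].
    have [c0 _] := c_ind g1 g2 g1G g2G.
    by rewrite /c' c0 // /bZ /b (negbTE xG) (negbTE (notin_groupVMl g1G xG)) floor0.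
  have xeG : (x * e)%g \in G by rewrite groupM // (subsetP sEG).
  apply: (@intr_inj rat); rewrite !c'_rat //.
  by rewrite /delta1 mulgA !(LaMr _ _ eE).
exists (c' g2 g3 (g1^-1 * 1)%g - c' (g1 * g2)%g g3 1%g + c' g1 (g2 * g3)%g 1%g - c' g1 g2 1%g).
move=> x xG; apply: (@intr_inj rat).
have dc := cocycle_delta2_const c_cocycle g1G g2G g3G xG (group1 G).
pose bQ g y : rat := (bZ g y)%:~R.
have dbx := delta2_delta1 bQ g1 g2 g3 x; have db1 := delta2_delta1 bQ g1 g2 g3 1%g.
rewrite /delta2 /delta1 /cochainQ /bQ in dc dbx db1.
by rewrite /c' !(intrD, intrN); lra.
Qed.

Let c'_cohomologous : cohomologous G H G c' c.
Proof.
exists (fun g x => - bZ g x); split=> [g gG | g1 g2 g1G g2G].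
  split=> [x /negbTE xG | x h xG hH]; first by rewrite /bZ /b xG floor0 oppr0.
  by rewrite /bZ bMr.
by exists 0 => x xG; rewrite /c'; ring.
Qed.

Lemma selmer_lift : exists c', cocycle G E G c' /\ cohomologous G H G c' c.
Proof. by exists c'; split; [exact: c'_cocycle | exact: c'_cohomologous]. Qed.

End SelmerLift.

Lemma jstar_surj c : sha_omega_trivial E H -> cocycle G H G c ->
  (forall C : {group gT}, C \subset G -> cyclic C -> coboundary G H C c) ->
  exists c', cocycle G E G c' /\ cohomologous G H G c' c.
Proof.
move=> sha c_cocycle c_loc.
have [w [ka [wH w_be]]] := sha_lift c_cocycle (sha_restr sha c_cocycle c_loc).
exact: selmer_lift c_cocycle wH w_be.
Qed.

(* phi is H-invariant only modulo Z; evaluating it at a fixed representative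
   of each coset u H makes Fchar phi exactly H-invariant *)
Definition Fchar (phi : gT -> rat) x := phi (repr (((tr x)^-1 * x) *: H)%g).

Lemma Fchar_approx phi x : qz_morph E phi -> {in H, forall h, integral (phi h)} ->
  integral (Fchar phi x - phi ((tr x)^-1 * x)%g).
Proof.
move=> phiE phiH; rewrite /Fchar; set u := ((tr x)^-1 * x)%g.
have : repr (u *: H)%g \in (u *: H)%g.
  by apply: (mem_repr u); rewrite mem_lcoset mulVg group1.
set s := repr _; rewrite mem_lcoset => usH.
have phi_us := phiE _ _ (trV_mul x) (subsetP sHE _ usH); rewrite mulKVg in phi_us.
have phi_s := phiH _ usH.
have -> : phi s - phi u = (phi s - phi u - phi (u^-1 * s)%g) + phi (u^-1 * s)%g by ring.
by int_closure.
Qed.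

Lemma Fchar_restr phi : qz_morph E phi -> {in H, forall h, integral (phi h)} ->
  {in E, forall e, integral (Fchar phi e - Fchar phi 1%g - phi e)}.
Proof.
move=> phiE phiH e eE.
have F_e := Fchar_approx e phiE phiH; have F_1 := Fchar_approx 1%g phiE phiH.
have tr_e : tr e = tr 1%g by rewrite -[in LHS](mul1g e) trMr.
have tr1E : ((tr 1%g)^-1 \in E)%g by have := trV_mul 1%g; rewrite mulg1.
rewrite tr_e in F_e; rewrite mulg1 in F_1.
have phi_1e := phiE _ _ tr1E eE.
have -> : Fchar phi e - Fchar phi 1%g - phi e =
  (Fchar phi e - phi ((tr 1%g)^-1 * e)%g) - (Fchar phi 1%g - phi (tr 1%g)^-1%g)
  + (phi ((tr 1%g)^-1 * e)%g - phi (tr 1%g)^-1%g - phi e) by ring.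
by int_closure.
Qed.

Lemma Fchar_adm phi : qz_morph E phi -> {in H, forall h, integral (phi h)} ->
  adm (Fchar phi).
Proof.
move=> phiE phiH; split=> [x h xG hH | x e xG eE].
  by rewrite /Fchar (trMr _ (subsetP sHE _ hH)) mulgA lcosetM lcoset_id.
have F_xe := Fchar_approx (x * e)%g phiE phiH; rewrite (trMr _ eE) mulgA in F_xe.
have F_x := Fchar_approx x phiE phiH; have F_e := Fchar_restr phiE phiH eE.
have phi_xe := phiE _ _ (trV_mul x) eE.
have -> : Fchar phi (x * e)%g - Fchar phi x - Fchar phi e + Fchar phi 1%g =
  (Fchar phi (x * e)%g - phi ((tr x)^-1 * x * e)%g) - (Fchar phi x - phi ((tr x)^-1 * x)%g)
  - (Fchar phi e - Fchar phi 1%g - phi e)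
  + (phi ((tr x)^-1 * x * e)%g - phi ((tr x)^-1 * x)%g - phi e) by ring.
by int_closure.
Qed.

Lemma cohomologous_Psi F1 F2 : adm F1 -> adm F2 ->
  {in E :&: (H * G^`(1))%g, forall k, integral ((F1 k - F1 1%g) - (F2 k - F2 1%g))} ->
  cohomologous G E G (Psi F1) (Psi F2).
Proof.
move=> admF1 admF2 F12K.
have /(Psi_trivialEP (admB admF1 admF2)) PsiF12_triv :
    {in E :&: (H * G^`(1))%g, forall k, integral ((F1 k - F2 k) - (F1 1%g - F2 1%g))}.
  move=> k kK; have -> : (F1 k - F2 k) - (F1 1%g - F2 1%g) =
    (F1 k - F1 1%g) - (F2 k - F2 1%g) by ring.
  exact: F12K.
by apply: eq_coboundary PsiF12_triv _ => g1 g2 x g1G g2G _; rewrite PsiB.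
Qed.

Let K := (E :&: (H * G^`(1)))%g.
Let N := (H * E^`(1))%g.

Lemma dual_extendable chi : dual_elt K N chi -> qz_extendable E K chi.
Proof.
move=> [chiK chiN].
have nHG' : H \subset 'N(G^`(1))%g.
  exact: subset_trans sHG (normal_norm (der_normal 1 G)).
have sE'N : E^`(1)%g \subset N by apply/subsetP => y yE'; rewrite -[y]mul1g mem_mulg.
have sE'K : E^`(1)%g \subset K.
  apply/subsetP => y yE'; rewrite inE (subsetP (der_sub 1 E)) //= -[y]mul1g mem_mulg //.
  exact: (subsetP (dergS 1 sEG)).
have defK : K = (E :&: (H <*> G^`(1)))%g by rewrite /K norm_joinEl.
rewrite defK in chiK sE'K *.
apply: qz_morph_extend (subsetIl _ _) sE'K chiK _ => y yE'.
exact: chiN (subsetP sE'N _ yE').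
Qed.

Definition lift_dual chi := Fchar (epsilon (inhabits chi)
  (fun th => qz_morph E th /\ {in K, forall k, integral (th k - chi k)})).

Lemma lift_dualP chi : dual_elt K N chi ->
  adm (lift_dual chi) /\ {in K, forall k, integral (lift_dual chi k - lift_dual chi 1%g - chi k)}.
Proof.
move=> chiKN; have [thE th_chi] := epsilon_spec (inhabits chi) _ (dual_extendable chiKN).
set th := epsilon _ _ in thE th_chi *.
have sHK : H \subset K.
  by apply/subsetP => h hH; rewrite inE (subsetP sHE) //= -[h]mulg1 mem_mulg.
have thH : {in H, forall h, integral (th h)}.
  move=> h hH; have th_h := th_chi h (subsetP sHK _ hH).
  have chi_h : integral (chi h) by apply: chiKN.2; rewrite -[h]mulg1 mem_mulg.
  have -> : th h = (th h - chi h) + chi h by ring.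
  by int_closure.
split=> [|k kK]; first exact: Fchar_adm.
have F_k := Fchar_restr thE thH (subsetP (subsetIl _ _) _ kK); have th_k := th_chi k kK.
have -> : lift_dual chi k - lift_dual chi 1%g - chi k =
  (Fchar th k - Fchar th 1%g - th k) + (th k - chi k) by rewrite /lift_dual; ring.
by int_closure.
Qed.

Definition psi_dual chi := Psi (lift_dual chi).

Lemma psi_dual_selmer chi : dual_elt K N chi ->
  cocycle G E G (psi_dual chi) /\ coboundary G H G (psi_dual chi).
Proof. by case/lift_dualP => admF _; split; [apply: Psi_cocycle | apply: Psi_trivialH]. Qed.

Lemma psi_dual_eq chi chi' : dual_elt K N chi -> dual_elt K N chi' ->
  dual_eq K chi chi' -> cohomologous G E G (psi_dual chi) (psi_dual chi').
Proof.
move=> /lift_dualP[admF F_chi] /lift_dualP[admF' F'_chi'] chi_chi'.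
apply: cohomologous_Psi => // k kK.
have F_k := F_chi k kK; have F'_k := F'_chi' k kK; have chi_k := chi_chi' k kK.
have -> : lift_dual chi k - lift_dual chi 1%g - (lift_dual chi' k - lift_dual chi' 1%g) =
  (lift_dual chi k - lift_dual chi 1%g - chi k)
  - (lift_dual chi' k - lift_dual chi' 1%g - chi' k) + (chi k - chi' k) by ring.
by int_closure.
Qed.

Lemma psi_dualD chi chi' : dual_elt K N chi -> dual_elt K N chi' ->
  cohomologous G E G (psi_dual (fun x => chi x + chi' x))
    (fun g1 g2 x => psi_dual chi g1 g2 x + psi_dual chi' g1 g2 x).
Proof.
move=> chiKN chi'KN; have [admF F_chi] := lift_dualP chiKN.
have [admF' F'_chi'] := lift_dualP chi'KN.
have [admF2 F2_chi2] := lift_dualP (dual_eltD chiKN chi'KN).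
set chi2 := fun x => _ in admF2 F2_chi2 *.
apply: eq_coboundary (cohomologous_Psi admF2 (admD admF admF') _) _.
  move=> k kK; have F_k := F_chi k kK; have F'_k := F'_chi' k kK.
  have F2_k := F2_chi2 k kK.
  have -> : lift_dual chi2 k - lift_dual chi2 1%g -
      (lift_dual chi k + lift_dual chi' k - (lift_dual chi 1%g + lift_dual chi' 1%g)) =
    (lift_dual chi2 k - lift_dual chi2 1%g - (chi k + chi' k))
    - (lift_dual chi k - lift_dual chi 1%g - chi k)
    - (lift_dual chi' k - lift_dual chi' 1%g - chi' k) by ring.
  by int_closure.
by move=> g1 g2 x g1G g2G _; rewrite /psi_dual PsiD.
Qed.

Lemma psi_dual_inj chi : dual_elt K N chi -> coboundary G E G (psi_dual chi) ->
  dual_eq K chi (fun _ => 0).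
Proof.
move=> /lift_dualP[admF F_chi] /(Psi_trivialEP admF) F_K k kK.
have F_k := F_K k kK; have F_chi_k := F_chi k kK.
have -> : chi k - 0 = (lift_dual chi k - lift_dual chi 1%g)
  - (lift_dual chi k - lift_dual chi 1%g - chi k) by ring.
by int_closure.
Qed.

Lemma psi_dual_onto_ker c : cocycle G E G c -> coboundary G H G c ->
  exists chi, dual_elt K N chi /\ cohomologous G E G c (psi_dual chi).
Proof.
move=> c_cocycle c_triv; have [F [admF c_PsiF]] := ker_Psi c_cocycle c_triv.
have [FH _] := admF; have chiE := adm_qz_morph admF.
set chi := fun e => F e - F 1%g in chiE.
have chiKN : dual_elt K N chi.
  split=> [x y /setIP[xE _] /setIP[yE _] | _ /mulsgP[h y hH yE' ->]]; first exact: chiE.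
  have hE := subsetP sHE _ hH; have yE := subsetP (der_sub 1 E) _ yE'.
  have chi_hy := chiE _ _ hE yE; have chi_y := qz_morph_der1 chiE yE'.
  have chi_h : chi h = 0 by rewrite /chi -[h]mul1g FH ?group1 // subrr.
  have -> : chi (h * y)%g = (chi (h * y)%g - chi h - chi y) + chi y by rewrite chi_h; ring.
  by int_closure.
exists chi; split => //; apply: (cohomologous_trans c_PsiF).
have [admF' F'_chi] := lift_dualP chiKN.
apply: cohomologous_Psi => // k kK; have F'_k := F'_chi k kK.
have -> : F k - F 1%g - (lift_dual chi k - lift_dual chi 1%g) =
  - (lift_dual chi k - lift_dual chi 1%g - chi k) by rewrite /chi; ring.
by int_closure.
Qed.

End ConnectingMap.

Theorem lemma4p6 (gT : finGroupType) (p : nat) (G E H : {group gT})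
    (Ds : {set {group gT}}) :
  prime p -> (p.-group E)%g -> (E <| G)%g -> H \subset E ->
  sha_omega_trivial E H -> admissible G Ds ->
  let K := E :&: (H * G^`(1))%g in
  let N := (H * E^`(1))%g in
  (* j_* maps Sel onto Sha^2_D(G, J_{G/H}) *)
  (forall c, cocycle G H G c -> (forall D : {group gT}, D \in Ds -> coboundary G H D c) ->
     exists c', cocycle G E G c' /\ cohomologous G H G c' c) /\
  (* an injective homomorphism ((K/N)^vee -> Sel) whose image is ker j_* *)
  (exists psi : (gT -> rat) -> cochain2 gT,
     (forall chi, dual_elt K N chi ->
        cocycle G E G (psi chi) /\ coboundary G H G (psi chi)) /\
     (forall chi chi', dual_elt K N chi -> dual_elt K N chi' -> dual_eq K chi chi' ->
        cohomologous G E G (psi chi) (psi chi')) /\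
     (forall chi chi', dual_elt K N chi -> dual_elt K N chi' ->
        cohomologous G E G (psi (fun x => chi x + chi' x))
                           (fun g1 g2 x => psi chi g1 g2 x + psi chi' g1 g2 x)) /\
     (forall chi, dual_elt K N chi -> coboundary G E G (psi chi) ->
        dual_eq K chi (fun _ => 0)) /\
     (forall c, cocycle G E G c -> coboundary G H G c ->
        exists chi, dual_elt K N chi /\ cohomologous G E G c (psi chi))).
Proof.
move=> _ _ nEG sHE sha [_ [Ds_cyclic _]] K N; split.
  move=> c c_cocycle c_loc; apply: (jstar_surj nEG sHE sha c_cocycle) => C sCG cycC.
  exact/c_loc/Ds_cyclic.
exists (psi_dual G E H); split; first exact: psi_dual_selmer nEG sHE.
split; first exact: psi_dual_eq nEG sHE.
split; first exact: psi_dualD nEG sHE.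
split; first exact: psi_dual_inj nEG sHE.
exact: psi_dual_onto_ker nEG sHE.
Qed.
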